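(* Let $\pi_3=2\int_0^1\frac{\mathrm{d}t}{\sqrt{1-t^6}}$ and let $\mathrm{sleaf}_3:\mathbb{R}\to\mathbb{R}$ be the leaf function of basis $3$. For every integer $m$: (i) if $\frac{\pi_3}{2}(4m-1)\le l\le\frac{\pi_3}{2}(4m+1)$, then $\mathrm{sleaf}_3(2l)=\dfrac{2\,\mathrm{sleaf}_3(l)\sqrt{1-(\mathrm{sleaf}_3(l))^6}}{\sqrt{1+8(\mathrm{sleaf}_3(l))^6}}$; (ii) if $\frac{\pi_3}{2}(4m+1)\le l\le\frac{\pi_3}{2}(4m+3)$, then $\mathrm{sleaf}_3(2l)=-\dfrac{2\,\mathrm{sleaf}_3(l)\sqrt{1-(\mathrm{sleaf}_3(l))^6}}{\sqrt{1+8(\mathrm{sleaf}_3(l))^6}}$.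
   Context: For a natural number $n$, the leaf function $\mathrm{sleaf}_n:\mathbb{R}\to\mathbb{R}$ is the solution of $\frac{\mathrm{d}^2r}{\mathrm{d}l^2}=-n\,r^{2n-1}$ with $r(0)=0$, $r'(0)=1$; it is periodic with period $2\pi_n$, where $\pi_n=2\int_0^1\frac{\mathrm{d}t}{\sqrt{1-t^{2n}}}$, and on $[-\pi_n/2,\pi_n/2]$ it is the inverse of $r\mapsto\int_0^r\frac{\mathrm{d}t}{\sqrt{1-t^{2n}}}$. *)

From Stdlib Require Import Reals.
From Coquelicot Require Import Coquelicot.
Open Scope R_scope.

Definition pi_n (n : nat) : R :=
  2 * RInt_gen (fun t => / sqrt (1 - t ^ (2 * n))) (at_point 0) (at_left 1).

Definition is_sleaf (n : nat) (r : R -> R) : Prop :=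
  exists r' : R -> R,
    r 0 = 0 /\ r' 0 = 1 /\
    (forall l, is_derive r l (r' l)) /\
    (forall l, is_derive r' l (- INR n * r l ^ (2 * n - 1))).

(** The substitution [t = sleaf_n s] shows that [pi_n / 2] is the first zero [tau] of
    [sleaf_n'], where [sleaf_n] reaches [1].  Solutions of [y'' = -n y^(2n-1)] bounded by [1]
    are determined by [(y, y')] at one point (Gronwall), so [sleaf_n] is odd and symmetric
    about [tau]; hence [sleaf_n'] is [4 tau]-periodic, nonnegative on [[-tau, tau]] and
    nonpositive on [[tau, 3 tau]].  For [n = 3], both [t |-> sleaf_3 (2 t)] and
    [t |-> 2 s s' / sqrt (1 + 8 s^6)] (with [s = sleaf_3 t]) solve [y'' = -12 y^5] with
    [y(0) = 0], [y'(0) = 2], so they coincide; finally [s' = +- sqrt (1 - s^6)] by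
    conservation of [s'^2 + s^6]. *)

From Stdlib Require Import Reals ZArith Lra Lia Classical.
From Coquelicot Require Import Coquelicot.
Open Scope R_scope.

(** * Calculus on the real line *)

Ltac rewrite_Derive :=
  repeat match goal with
  | H : forall t, is_derive _ t _ |- context [Derive ?g ?s] =>
      rewrite (is_derive_unique g s _ (H s))
  end.

Lemma is_derive_continuity (f df : R -> R) :
  (forall t, is_derive f t (df t)) -> continuity f.
Proof.
  intros Hf t. apply continuity_pt_filterlim, (ex_derive_continuous (V := R_NormedModule)).
  exists (df t); apply Hf.
Qed.

Lemma MVT_le (f df : R -> R) a b :
  (forall t, is_derive f t (df t)) -> a <= b ->
  exists c, a <= c <= b /\ f b - f a = df c * (b - a).
Proof.
  intros Hf hab. destruct (MVT_gen f a b df) as [c [hc e]].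
  - intros t _; apply Hf.
  - intros t _; apply (is_derive_continuity f df Hf).
  - rewrite Rmin_left, Rmax_right in hc by lra. eauto.
Qed.

Lemma derive_nonpos_antitone (f df : R -> R) a b :
  (forall t, is_derive f t (df t)) -> (forall t, df t <= 0) -> a <= b -> f b <= f a.
Proof.
  intros Hf hdf hab. destruct (MVT_le f df a b Hf hab) as [c [_ e]].
  specialize (hdf c). nra.
Qed.

Lemma derive_zero_const (f : R -> R) :
  (forall t, is_derive f t 0) -> forall t, f t = f 0.
Proof.
  intros Hf t. destruct (Rle_dec 0 t).
  - destruct (MVT_le f (fun _ => 0) 0 t Hf) as [c [_ e]]; lra.
  - destruct (MVT_le f (fun _ => 0) t 0 Hf) as [c [_ e]]; lra.
Qed.

Lemma is_derive_comp_affine (f : R -> R) df a c t :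
  is_derive f (a + c * t) df -> is_derive (fun s => f (a + c * s)) t (c * df).
Proof.
  intros Hf. apply (is_derive_comp f (fun s => a + c * s)); [exact Hf|].
  auto_derive; [trivial | ring].
Qed.

Lemma continuity_pt_pos_near (f : R -> R) x :
  continuity_pt f x -> 0 < f x -> exists d, 0 < d /\ forall y, Rabs (y - x) < d -> 0 < f y.
Proof.
  intros Hf hx. destruct (proj1 (continuity_pt_locally f x) Hf (mkposreal _ hx)) as [d Hd].
  exists d. split; [apply cond_pos|]. intros y hy.
  specialize (Hd y hy). apply Rabs_def2 in Hd. simpl in Hd. lra.
Qed.

Lemma Rabs_pow_sub_le (p : nat) a b M :
  Rabs a <= M -> Rabs b <= M ->
  Rabs (a ^ p - b ^ p) <= INR p * M ^ (p - 1) * Rabs (a - b).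
Proof.
  assert (Hle : forall x y, x <= y -> Rabs x <= M -> Rabs y <= M ->
    Rabs (y ^ p - x ^ p) <= INR p * M ^ (p - 1) * Rabs (y - x)).
  { intros x y hxy hx hy.
    destruct (MVT_le (fun t => t ^ p) (fun t => INR p * t ^ (p - 1)) x y)
      as [c [hc ->]]; [|exact hxy|].
    - intros t. auto_derive; [trivial|]. rewrite Nat.sub_1_r. ring.
    - assert (hcM : Rabs c <= M).
      { apply Rabs_le_between in hx, hy. apply Rabs_le_between. lra. }
      rewrite !Rabs_mult, Rabs_right by (apply Rle_ge, pos_INR).
      apply Rmult_le_compat_r; [apply Rabs_pos|].
      apply Rmult_le_compat_l; [apply pos_INR|].
      rewrite <- RPow_abs. apply pow_incr. split; [apply Rabs_pos | exact hcM]. }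
  intros ha hb. destruct (Rle_dec b a) as [hba|hab].
  - exact (Hle b a hba hb ha).
  - rewrite (Rabs_minus_sym (a ^ p)), (Rabs_minus_sym a). apply Hle; auto. lra.
Qed.

Lemma monomial_lipschitz (c : R) (p : nat) M a b :
  Rabs a <= M -> Rabs b <= M ->
  Rabs (c * a ^ p - c * b ^ p) <= Rabs c * INR p * M ^ (p - 1) * Rabs (a - b).
Proof.
  intros ha hb. rewrite <- Rmult_minus_distr_l, Rabs_mult, !Rmult_assoc.
  apply Rmult_le_compat_l; [apply Rabs_pos|]. rewrite <- !Rmult_assoc.
  exact (Rabs_pow_sub_le p a b M ha hb).
Qed.

Lemma pow_even_ge_0 x n : 0 <= x ^ (2 * n).
Proof. rewrite pow_mult. apply pow_le, pow2_ge_0. Qed.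

Lemma pow_even_le_1 x n : (0 < n)%nat -> x ^ (2 * n) <= 1 -> Rabs x <= 1.
Proof.
  intros hn hx. apply Rnot_lt_le. intros hgt.
  pose proof (Rlt_pow_R1 _ (2 * n) hgt ltac:(lia)) as h.
  rewrite RPow_abs, Rabs_right in h by apply Rle_ge, pow_even_ge_0. lra.
Qed.

Lemma pow_eq_1_nonneg x k : (0 < k)%nat -> 0 <= x -> x ^ k = 1 -> x = 1.
Proof.
  intros hk hx e. destruct (Rtotal_order x 1) as [lt|[eq|gt]]; [|exact eq|].
  - pose proof (pow_lt_1_compat x k (conj hx lt) hk). lra.
  - pose proof (Rlt_pow_R1 x k gt hk). lra.
Qed.

(** * Autonomous second-order equations [y'' = g y] *)

(* Gronwall: [t |-> D t * exp (- K (t - t0))] is nonincreasing. *)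
Lemma gronwall_vanish_right (D dD : R -> R) K t0 :
  (forall t, is_derive D t (dD t)) -> (forall t, 0 <= D t) ->
  (forall t, dD t <= K * D t) -> D t0 = 0 -> forall t, t0 <= t -> D t = 0.
Proof.
  intros HD D_ge0 HdD D0 t ht.
  set (w := fun s => exp (- K * (s - t0))).
  assert (Hw : forall s, is_derive (fun s => D s * w s) s ((dD s - K * D s) * w s)).
  { intros s. unfold w. auto_derive; [exists (dD s); apply HD|].
    rewrite_Derive. unfold Rminus. ring. }
  assert (Hmono : D t * w t <= D t0 * w t0).
  { apply (derive_nonpos_antitone _ _ t0 t Hw); [|exact ht].
    intros s. pose proof (HdD s). assert (0 < w s) by apply exp_pos. nra. }
  rewrite D0 in Hmono. assert (0 < w t) by apply exp_pos. pose proof (D_ge0 t). nra.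
Qed.

Lemma gronwall_vanish (D dD : R -> R) K t0 :
  (forall t, is_derive D t (dD t)) -> (forall t, 0 <= D t) ->
  (forall t, Rabs (dD t) <= K * D t) -> D t0 = 0 -> forall t, D t = 0.
Proof.
  intros HD D_ge0 HdD D0 t.
  destruct (Rle_dec t0 t) as [ht|ht].
  - apply (gronwall_vanish_right D dD K t0); auto.
    intros s. apply (Rle_trans _ _ _ (Rle_abs _)), HdD.
  - replace t with (2 * t0 + -1 * (2 * t0 - t)) by ring.
    apply (gronwall_vanish_right (fun s => D (2 * t0 + -1 * s))
      (fun s => -1 * dD (2 * t0 + -1 * s)) K t0); try lra.
    + intros s. apply is_derive_comp_affine, HD.
    + intros s. apply D_ge0.
    + intros s. pose proof (HdD (2 * t0 + -1 * s)) as h. apply Rabs_le_between in h. lra.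
    + replace (2 * t0 + -1 * t0) with t0 by ring. exact D0.
Qed.

Definition is_ode2_sol (g y y' : R -> R) : Prop :=
  (forall t, is_derive y t (y' t)) /\ (forall t, is_derive y' t (g (y t))).

Lemma is_ode2_sol_ext g y y' z z' :
  (forall t, y t = z t) -> (forall t, y' t = z' t) ->
  is_ode2_sol g y y' -> is_ode2_sol g z z'.
Proof.
  intros Hz Hz' [Hy Hy']. split; intros t.
  - rewrite <- Hz'. apply (is_derive_ext y); auto.
  - rewrite <- Hz. apply (is_derive_ext y'); auto.
Qed.

Lemma is_ode2_sol_affine g h y y' a c :
  (forall u, h u = c ^ 2 * g u) -> is_ode2_sol g y y' ->
  is_ode2_sol h (fun t => y (a + c * t)) (fun t => c * y' (a + c * t)).
Proof.
  intros Hh [Hy Hy']. split; intros t.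
  - apply is_derive_comp_affine, Hy.
  - rewrite Hh. replace (c ^ 2 * g (y (a + c * t))) with (c * (c * g (y (a + c * t)))) by ring.
    apply is_derive_scal, is_derive_comp_affine, Hy'.
Qed.

Lemma is_ode2_sol_reflect g y y' a :
  is_ode2_sol g y y' -> is_ode2_sol g (fun t => y (a - t)) (fun t => - y' (a - t)).
Proof.
  intros Hsol. apply (is_ode2_sol_ext g (fun t => y (a + -1 * t)) (fun t => -1 * y' (a + -1 * t))).
  - intros t. f_equal. ring.
  - intros t. replace (a + -1 * t) with (a - t) by ring. ring.
  - apply (is_ode2_sol_affine g); [intros u; ring | exact Hsol].
Qed.

Lemma is_ode2_sol_shift g y y' a :
  is_ode2_sol g y y' -> is_ode2_sol g (fun t => y (a + t)) (fun t => y' (a + t)).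
Proof.
  intros Hsol. apply (is_ode2_sol_ext g (fun t => y (a + 1 * t)) (fun t => 1 * y' (a + 1 * t))).
  - intros t. f_equal. ring.
  - intros t. rewrite !Rmult_1_l. reflexivity.
  - apply (is_ode2_sol_affine g); [intros u; ring | exact Hsol].
Qed.

Lemma is_ode2_sol_opp g y y' :
  (forall u, g (- u) = - g u) -> is_ode2_sol g y y' ->
  is_ode2_sol g (fun t => - y t) (fun t => - y' t).
Proof.
  intros Hg [Hy Hy']. split; intros t.
  - apply (is_derive_opp y), Hy.
  - rewrite Hg. apply (is_derive_opp y'), Hy'.
Qed.

(* [D = (y1 - y2)^2 + (y1' - y2')^2] satisfies [|D'| <= (1 + |L|) D] and [D t0 = 0]. *)
Lemma is_ode2_sol_unique g L M y1 d1 y2 d2 t0 :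
  (forall a b, Rabs a <= M -> Rabs b <= M -> Rabs (g a - g b) <= L * Rabs (a - b)) ->
  is_ode2_sol g y1 d1 -> is_ode2_sol g y2 d2 ->
  (forall t, Rabs (y1 t) <= M) -> (forall t, Rabs (y2 t) <= M) ->
  y1 t0 = y2 t0 -> d1 t0 = d2 t0 -> forall t, y1 t = y2 t /\ d1 t = d2 t.
Proof.
  intros Hg [Hy1 Hd1] [Hy2 Hd2] B1 B2 e0 e0' t.
  set (D := fun t => (y1 t - y2 t) ^ 2 + (d1 t - d2 t) ^ 2).
  set (dD := fun t => 2 * (y1 t - y2 t) * (d1 t - d2 t)
                      + 2 * (d1 t - d2 t) * (g (y1 t) - g (y2 t))).
  assert (HD : forall t, is_derive D t (dD t)).
  { intros s. unfold D, dD. auto_derive.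
    - repeat split; eexists; eauto.
    - rewrite_Derive. ring. }
  assert (HdD : forall t, Rabs (dD t) <= (1 + Rabs L) * D t).
  { intros s. unfold D, dD.
    pose proof (Hg _ _ (B1 s) (B2 s)) as Lip.
    set (a := y1 s - y2 s) in *. set (b := d1 s - d2 s).
    set (c := g (y1 s) - g (y2 s)) in *. clearbody a b c.
    assert (amgm : 2 * (Rabs a * Rabs b) <= a ^ 2 + b ^ 2).
    { rewrite <- (pow2_abs a), <- (pow2_abs b). pose proof (pow2_ge_0 (Rabs a - Rabs b)). nra. }
    assert (Lc : Rabs b * Rabs c <= Rabs L * (Rabs a * Rabs b)).
    { pose proof (Rmult_le_compat_r _ _ _ (Rabs_pos a) (Rle_abs L)) as La.
      pose proof (Rmult_le_compat_l _ _ _ (Rabs_pos b) (Rle_trans _ _ _ Lip La)). nra. }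
    eapply Rle_trans; [apply Rabs_triang|]. rewrite !Rabs_mult, Rabs_right by lra.
    pose proof (Rabs_pos L). pose proof (Rabs_pos a). pose proof (Rabs_pos b). nra. }
  assert (D_ge0 : forall t, 0 <= D t).
  { intros s. unfold D. pose proof (pow2_ge_0 (y1 s - y2 s)). pose proof (pow2_ge_0 (d1 s - d2 s)). lra. }
  assert (D0 : D t0 = 0) by (unfold D; rewrite e0, e0'; ring).
  pose proof (gronwall_vanish D dD _ t0 HD D_ge0 HdD D0 t) as Dt. unfold D in Dt.
  pose proof (pow2_ge_0 (y1 t - y2 t)). pose proof (pow2_ge_0 (d1 t - d2 t)).
  split; apply Rminus_diag_uniq, Rsqr_eq_0; unfold Rsqr; nra.
Qed.

Lemma monomial_ode2_sol_unique c p M y1 d1 y2 d2 t0 :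
  is_ode2_sol (fun u => c * u ^ p) y1 d1 -> is_ode2_sol (fun u => c * u ^ p) y2 d2 ->
  (forall t, Rabs (y1 t) <= M) -> (forall t, Rabs (y2 t) <= M) ->
  y1 t0 = y2 t0 -> d1 t0 = d2 t0 -> forall t, y1 t = y2 t /\ d1 t = d2 t.
Proof.
  apply (is_ode2_sol_unique _ (Rabs c * INR p * M ^ (p - 1)) M).
  intros a b. apply monomial_lipschitz.
Qed.

(** * Leaf functions *)

Definition leaf_force (n : nat) (u : R) : R := - INR n * u ^ (2 * n - 1).

Lemma leaf_force_odd n u : (0 < n)%nat -> leaf_force n (- u) = - leaf_force n u.
Proof.
  intros hn. unfold leaf_force. replace (2 * n - 1)%nat with (S (2 * (n - 1))) by lia.
  rewrite <- !tech_pow_Rmult, !pow_mult. replace ((- u) ^ 2) with (u ^ 2) by ring. ring.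
Qed.

Lemma is_sleaf_ode2_sol n r :
  is_sleaf n r <-> exists r', r 0 = 0 /\ r' 0 = 1 /\ is_ode2_sol (leaf_force n) r r'.
Proof.
  split; intros [r' [h0 [h0' [Hr Hr']]]]; exists r'; exact (conj h0 (conj h0' (conj Hr Hr'))).
Qed.

Definition leaf_integrand (n : nat) (t : R) : R := / sqrt (1 - t ^ (2 * n)).

Lemma leaf_integrand_continuous n y : y ^ (2 * n) < 1 -> continuous (leaf_integrand n) y.
Proof.
  intros hy. apply (ex_derive_continuous (V := R_NormedModule)). unfold leaf_integrand.
  auto_derive. replace (n + (n + 0))%nat with (2 * n)%nat by lia.
  repeat split; [lra|]. apply Rgt_not_eq, sqrt_lt_R0. lra.
Qed.

Section LeafFunction.

Variables (n : nat) (r r' : R -> R).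
Hypothesis n_pos : (0 < n)%nat.
Hypothesis r_0 : r 0 = 0.
Hypothesis r'_0 : r' 0 = 1.
Hypothesis r_sol : is_ode2_sol (leaf_force n) r r'.

Lemma leaf_energy t : r' t ^ 2 + r t ^ (2 * n) = 1.
Proof.
  destruct r_sol as [Hr Hr'].
  assert (E : forall t, is_derive (fun t => r' t ^ 2 + r t ^ (2 * n)) t 0).
  { intros s. auto_derive.
    - repeat split; eexists; [apply Hr' | apply Hr].
    - rewrite_Derive. unfold leaf_force. replace (n + (n + 0))%nat with (2 * n)%nat by lia.
      rewrite Nat.sub_1_r, mult_INR. simpl (INR 2). ring. }
  rewrite (derive_zero_const _ E t), r_0, r'_0, pow_i by lia. ring.
Qed.

Lemma leaf_abs_le_1 t : Rabs (r t) <= 1.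
Proof.
  apply (pow_even_le_1 _ n n_pos). pose proof (leaf_energy t). pose proof (pow2_ge_0 (r' t)). lra.
Qed.

Lemma leaf_deriv_abs_le_1 t : Rabs (r' t) <= 1.
Proof.
  apply (pow_even_le_1 _ 1 ltac:(lia)).
  pose proof (leaf_energy t). pose proof (pow_even_ge_0 (r t) n). simpl in *. lra.
Qed.

Lemma leaf_ode2_sol_unique y1 d1 y2 d2 t0 :
  is_ode2_sol (leaf_force n) y1 d1 -> is_ode2_sol (leaf_force n) y2 d2 ->
  (forall t, Rabs (y1 t) <= 1) -> (forall t, Rabs (y2 t) <= 1) ->
  y1 t0 = y2 t0 -> d1 t0 = d2 t0 -> forall t, y1 t = y2 t /\ d1 t = d2 t.
Proof. exact (monomial_ode2_sol_unique (- INR n) (2 * n - 1) 1 y1 d1 y2 d2 t0). Qed.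

Lemma leaf_odd t : r (- t) = - r t /\ r' (- t) = r' t.
Proof.
  destruct (leaf_ode2_sol_unique (fun t => r (0 - t)) (fun t => - r' (0 - t))
    (fun t => - r t) (fun t => - r' t) 0) with (t := t) as [e e'].
  - exact (is_ode2_sol_reflect _ _ _ 0 r_sol).
  - exact (is_ode2_sol_opp _ _ _ (fun u => leaf_force_odd n u n_pos) r_sol).
  - intros s. apply leaf_abs_le_1.
  - intros s. rewrite Rabs_Ropp. apply leaf_abs_le_1.
  - rewrite Rminus_0_r, r_0. ring.
  - rewrite Rminus_0_r. reflexivity.
  - rewrite Rminus_0_l in e, e'. split; lra.
Qed.

Lemma exists_leaf_deriv_nonpos : exists t, 0 < t /\ r' t <= 0.
Proof.
  destruct r_sol as [Hr Hr'].
  destruct (classic (exists t, 0 < t /\ r' t <= 0)) as [|Hneg]; [assumption|exfalso].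
  assert (pos : forall t, 0 <= t -> 0 < r' t).
  { intros t ht. destruct (Req_dec t 0) as [->|]; [lra|].
    apply Rnot_le_lt. intros hle. apply Hneg. exists t. split; lra. }
  set (a := r 1).
  assert (a_pos : 0 < a).
  { destruct (MVT_le r r' 0 1 Hr ltac:(lra)) as [c [hc e]].
    rewrite r_0 in e. pose proof (pos c ltac:(lra)). unfold a. nra. }
  assert (r_ge_a : forall t, 1 <= t -> a <= r t).
  { intros t ht. destruct (MVT_le r r' 1 t Hr ht) as [c [hc e]].
    pose proof (pos c ltac:(lra)). unfold a. nra. }
  set (k := INR n * a ^ (2 * n - 1)).
  assert (k_pos : 0 < k) by (apply Rmult_lt_0_compat; [apply lt_0_INR; lia | apply pow_lt; lra]).
  (* [r'' <= - k] on [[1, +oo)], so [r'] drops by at least [1] over a length [1 / k]. *)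
  set (T := 1 + / k).
  assert (T_ge : 1 <= T) by (unfold T; pose proof (Rinv_0_lt_compat k k_pos); lra).
  destruct (MVT_le r' (fun t => leaf_force n (r t)) 1 T Hr' T_ge) as [c [hc e]].
  assert (drop : leaf_force n (r c) * (T - 1) <= -1).
  { unfold leaf_force, T. replace (1 + / k - 1) with (/ k) by ring.
    assert (k <= INR n * r c ^ (2 * n - 1)).
    { apply Rmult_le_compat_l; [apply pos_INR|]. apply pow_incr. split; [lra | apply r_ge_a; lra]. }
    assert (k * / k = 1) by (field; lra). pose proof (Rinv_0_lt_compat k k_pos). nra. }
  pose proof (pos T ltac:(lra)). pose proof (leaf_deriv_abs_le_1 1) as h.
  apply Rabs_le_between in h. lra.
Qed.

Lemma leaf_first_deriv_zero :
  exists tau, 0 < tau /\ r' tau = 0 /\ forall s, 0 <= s < tau -> 0 < r' s.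
Proof.
  pose proof (is_derive_continuity _ _ (proj2 r_sol)) as r'_cont.
  destruct exists_leaf_deriv_nonpos as [t1 [t1_pos t1_neg]].
  set (E := fun x => 0 <= x /\ forall s, 0 <= s <= x -> 0 < r' s).
  assert (E_bound : bound E).
  { exists t1. intros x [hx Hx]. apply Rnot_lt_le. intros lt. pose proof (Hx t1 ltac:(lra)). lra. }
  destruct (continuity_pt_pos_near r' 0 (r'_cont 0) ltac:(lra)) as [d0 [d0_pos Hd0]].
  assert (E_d0 : E (d0 / 2)).
  { split; [lra|]. intros s hs. apply Hd0, Rabs_def1; lra. }
  destruct (completeness E E_bound (ex_intro _ _ E_d0)) as [tau [ub lub]].
  assert (tau_pos : 0 < tau) by (pose proof (ub _ E_d0); lra).
  assert (pos : forall s, 0 <= s < tau -> 0 < r' s).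
  { intros s hs. apply Rnot_le_lt. intros hle.
    assert (s_ub : is_upper_bound E s).
    { intros x [hx Hx]. apply Rnot_lt_le. intros lt. pose proof (Hx s ltac:(lra)). lra. }
    pose proof (lub s s_ub). lra. }
  exists tau. split; [exact tau_pos|]. split; [|exact pos].
  destruct (Rtotal_order (r' tau) 0) as [neg|[zero|posi]]; [exfalso | exact zero | exfalso].
  - destruct (continuity_pt_pos_near (fun t => - r' t) tau
      (continuity_pt_opp _ _ (r'_cont tau)) ltac:(lra)) as [d [d_pos Hd]].
    set (s := Rmax 0 (tau - d / 2)).
    assert (hs : 0 <= s < tau /\ Rabs (s - tau) < d).
    { unfold s, Rmax. destruct (Rle_dec 0 (tau - d / 2)); split; try split; try apply Rabs_def1; lra. }
    pose proof (pos s (proj1 hs)). pose proof (Hd s (proj2 hs)). lra.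
  - destruct (continuity_pt_pos_near r' tau (r'_cont tau) posi) as [d [d_pos Hd]].
    assert (E_beyond : E (tau + d / 2)).
    { split; [lra|]. intros s hs. destruct (Rlt_dec s tau); [apply pos; lra|].
      apply Hd, Rabs_def1; lra. }
    pose proof (ub _ E_beyond). lra.
Qed.

Section QuarterPeriod.

Variable tau : R.
Hypothesis tau_pos : 0 < tau.
Hypothesis r'_tau : r' tau = 0.
Hypothesis r'_pos : forall s, 0 <= s < tau -> 0 < r' s.

Lemma leaf_nonneg s : 0 <= s <= tau -> 0 <= r s.
Proof.
  intros hs. destruct (MVT_le r r' 0 s (proj1 r_sol) (proj1 hs)) as [c [hc e]].
  assert (0 <= r' c) by (destruct (Req_dec c tau) as [->|]; [lra | left; apply r'_pos; lra]).
  rewrite r_0 in e. nra.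
Qed.

Lemma leaf_at_quarter_period : r tau = 1.
Proof.
  apply (pow_eq_1_nonneg _ (2 * n)); [lia | apply leaf_nonneg; lra |].
  pose proof (leaf_energy tau) as E. rewrite r'_tau in E. lra.
Qed.

Lemma leaf_pow_lt_1 s : 0 <= s < tau -> r s ^ (2 * n) < 1.
Proof. intros hs. pose proof (r'_pos s hs). pose proof (leaf_energy s). nra. Qed.

Lemma leaf_lt_1 s : 0 <= s < tau -> r s < 1.
Proof.
  intros hs. pose proof (leaf_pow_lt_1 s hs) as h1. pose proof (leaf_abs_le_1 s) as h.
  apply Rabs_le_between in h. destruct (Req_dec (r s) 1) as [e|]; [|lra].
  rewrite e, pow1 in h1. lra.
Qed.

(* Substitute [t = r s], [dt = r' s ds = sqrt (1 - r s ^ (2 n)) ds]. *)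
Lemma is_RInt_leaf_inverse b : 0 <= b < tau -> is_RInt (leaf_integrand n) 0 (r b) b.
Proof.
  intros hb. destruct r_sol as [Hr Hr'].
  assert (Hsubst : is_RInt (fun s => scal (r' s) (leaf_integrand n (r s))) 0 b
                     (RInt (leaf_integrand n) (r 0) (r b))).
  { apply (is_RInt_comp (V := R_CompleteNormedModule)).
    - intros s hs. rewrite Rmin_left, Rmax_right in hs by lra.
      apply leaf_integrand_continuous, leaf_pow_lt_1. lra.
    - intros s _. split; [apply Hr|].
      apply (ex_derive_continuous (V := R_NormedModule)). eexists; apply Hr'. }
  rewrite r_0 in Hsubst.
  assert (Hone : is_RInt (fun _ => 1) 0 b (RInt (leaf_integrand n) 0 (r b))).
  { apply (is_RInt_ext (fun s => scal (r' s) (leaf_integrand n (r s)))); [|exact Hsubst].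
    intros s hs. rewrite Rmin_left, Rmax_right in hs by lra.
    pose proof (r'_pos s ltac:(lra)). pose proof (leaf_energy s).
    unfold leaf_integrand. replace (1 - r s ^ (2 * n)) with (r' s ^ 2) by lra.
    rewrite sqrt_pow2 by lra. change (r' s * / r' s = 1). field. lra. }
  assert (Hval : RInt (leaf_integrand n) 0 (r b) = b).
  { rewrite <- (is_RInt_unique _ _ _ _ Hone), (is_RInt_unique _ _ _ _ (is_RInt_const 0 b 1)).
    change (scal (b - 0) 1 = b). unfold scal; simpl. unfold mult; simpl. ring. }
  rewrite <- Hval at 2.
  apply (RInt_correct (V := R_CompleteNormedModule)), (ex_RInt_continuous (V := R_CompleteNormedModule)).
  intros z hz. rewrite Rmin_left, Rmax_right in hz by (apply leaf_nonneg; lra).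
  apply leaf_integrand_continuous.
  pose proof (leaf_pow_lt_1 b hb). pose proof (pow_even_ge_0 z n).
  assert (z ^ (2 * n) <= r b ^ (2 * n)) by (apply pow_incr; lra). lra.
Qed.

(* Near [1-], every [y] is [r x] with [x] near [tau], and the integral up to [y] is [x]. *)
Lemma is_RInt_gen_leaf_integrand :
  is_RInt_gen (leaf_integrand n) (at_point 0) (at_left 1) tau.
Proof.
  intros P [eps HP].
  set (b := Rmax (tau / 2) (tau - eps / 2)).
  assert (hb : 0 <= b < tau /\ tau - b <= eps / 2).
  { unfold b, Rmax. pose proof (cond_pos eps). destruct (Rle_dec (tau / 2) (tau - eps / 2)); lra. }
  pose proof (leaf_lt_1 b (proj1 hb)) as rb_lt_1.
  apply (Filter_prod _ _ _ (fun a => a = 0) (fun y => r b < y < 1)); [reflexivity| |].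
  - exists (mkposreal (1 - r b) ltac:(lra)). intros y hy hy1.
    change (Rabs (y - 1) < 1 - r b) in hy. apply Rabs_def2 in hy. lra.
  - intros a y -> hy.
    destruct (IVT_gen r b tau y (is_derive_continuity _ _ (proj1 r_sol))) as [x [hx e]].
    { rewrite Rmin_left, Rmax_right; rewrite ?leaf_at_quarter_period; lra. }
    rewrite Rmin_left, Rmax_right in hx by lra.
    assert (x <> tau) by (intros ->; rewrite leaf_at_quarter_period in e; lra).
    exists x. split.
    + rewrite <- e. apply is_RInt_leaf_inverse. lra.
    + apply HP. change (Rabs (x - tau) < eps). apply Rabs_def1; lra.
Qed.

Lemma pi_n_eq : pi_n n = 2 * tau.
Proof.
  unfold pi_n. change (fun t => / sqrt (1 - t ^ (2 * n))) with (leaf_integrand n).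
  rewrite (is_RInt_gen_unique _ _ is_RInt_gen_leaf_integrand). reflexivity.
Qed.

Lemma leaf_reflect t : r (tau + t) = r (tau - t) /\ r' (tau + t) = - r' (tau - t).
Proof.
  apply (leaf_ode2_sol_unique (fun t => r (tau + t)) (fun t => r' (tau + t))
    (fun t => r (tau - t)) (fun t => - r' (tau - t)) 0).
  - exact (is_ode2_sol_shift _ _ _ tau r_sol).
  - exact (is_ode2_sol_reflect _ _ _ tau r_sol).
  - intros s. apply leaf_abs_le_1.
  - intros s. apply leaf_abs_le_1.
  - f_equal. ring.
  - rewrite Rplus_0_r, Rminus_0_r, r'_tau. ring.
Qed.

Lemma leaf_deriv_antiperiodic t : r' (t + 2 * tau) = - r' t.
Proof.
  replace (t + 2 * tau) with (tau + (tau + t)) by ring.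
  rewrite (proj2 (leaf_reflect _)). replace (tau - (tau + t)) with (- t) by ring.
  rewrite (proj2 (leaf_odd t)). reflexivity.
Qed.

Lemma leaf_deriv_periodic (m : Z) t : r' (t + 4 * IZR m * tau) = r' t.
Proof.
  induction m as [| m IHm | m IHm] using Z.peano_ind.
  - f_equal. ring.
  - rewrite succ_IZR, <- IHm.
    replace (t + 4 * (IZR m + 1) * tau) with (t + 4 * IZR m * tau + 2 * tau + 2 * tau) by ring.
    rewrite !leaf_deriv_antiperiodic. ring.
  - rewrite <- Z.sub_1_r, minus_IZR, <- IHm.
    replace (t + 4 * IZR m * tau) with (t + 4 * (IZR m - 1) * tau + 2 * tau + 2 * tau) by ring.
    rewrite !leaf_deriv_antiperiodic. ring.
Qed.

Lemma leaf_deriv_shift_period (m : Z) t : r' t = r' (t - 4 * IZR m * tau).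
Proof. rewrite <- (leaf_deriv_periodic m (t - 4 * IZR m * tau)). f_equal. ring. Qed.

Lemma leaf_deriv_nonneg_centered t : - tau <= t <= tau -> 0 <= r' t.
Proof.
  assert (Hpos : forall s, 0 <= s <= tau -> 0 <= r' s).
  { intros s hs. destruct (Req_dec s tau) as [->|]; [lra | left; apply r'_pos; lra]. }
  intros ht. destruct (Rle_dec 0 t); [apply Hpos; lra|].
  rewrite <- (proj2 (leaf_odd t)). apply Hpos. lra.
Qed.

Lemma leaf_deriv_nonneg (m : Z) t :
  tau * (4 * IZR m - 1) <= t <= tau * (4 * IZR m + 1) -> 0 <= r' t.
Proof.
  intros ht. rewrite (leaf_deriv_shift_period m). apply leaf_deriv_nonneg_centered. nra.
Qed.

Lemma leaf_deriv_nonpos (m : Z) t :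
  tau * (4 * IZR m + 1) <= t <= tau * (4 * IZR m + 3) -> r' t <= 0.
Proof.
  intros ht. rewrite (leaf_deriv_shift_period m).
  replace (t - 4 * IZR m * tau) with (t - 4 * IZR m * tau - 2 * tau + 2 * tau) by ring.
  rewrite leaf_deriv_antiperiodic.
  pose proof (leaf_deriv_nonneg_centered (t - 4 * IZR m * tau - 2 * tau)). nra.
Qed.

End QuarterPeriod.

End LeafFunction.

(** * The duplication formula for [sleaf_3] *)

Definition leaf3_dup (s : R) : R := 2 * s / sqrt (1 + 8 * s ^ 6).

(* The derivative of [t |-> leaf3_dup (r t) * r' t], once [r' ^ 2 = 1 - r ^ 6] is used. *)
Definition leaf3_dup_deriv (s : R) : R :=
  (2 - 40 * s ^ 6 - 16 * s ^ 12) / sqrt (1 + 8 * s ^ 6) ^ 3.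

Lemma leaf3_dup_abs_le s : Rabs s <= 1 -> Rabs (leaf3_dup s) <= 2.
Proof.
  intros hs. unfold leaf3_dup.
  assert (q_ge_1 : 1 <= sqrt (1 + 8 * s ^ 6)).
  { rewrite <- sqrt_1 at 1. apply sqrt_le_1_alt.
    assert (0 <= s ^ 6) by exact (pow_even_ge_0 s 3). lra. }
  rewrite Rabs_div, Rabs_mult, Rabs_pos_eq, (Rabs_pos_eq (sqrt _)) by (apply sqrt_pos || lra).
  apply Rle_div_l; [lra|]. pose proof (Rabs_pos s). nra.
Qed.

Section Duplication.

Variables r r' : R -> R.
Hypothesis r_0 : r 0 = 0.
Hypothesis r'_0 : r' 0 = 1.
Hypothesis r_sol : is_ode2_sol (leaf_force 3) r r'.

Lemma leaf3_dup_ode2_sol :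
  is_ode2_sol (fun u => -12 * u ^ 5)
    (fun t => leaf3_dup (r t) * r' t) (fun t => leaf3_dup_deriv (r t)).
Proof.
  pose proof (leaf_energy 3 r r' ltac:(lia) r_0 r'_0 r_sol) as E.
  destruct r_sol as [Hr Hr'].
  split; intros t; specialize (E t);
    assert (w_pos : 0 < 1 + 8 * r t ^ 6) by (pose proof (pow2_ge_0 (r t ^ 3)); nra);
    pose proof (sqrt_lt_R0 _ w_pos) as q_pos;
    pose proof (sqrt_sqrt _ (Rlt_le _ _ w_pos)) as q_sq;
    unfold leaf3_dup, leaf3_dup_deriv; auto_derive;
    try (rewrite_Derive; unfold leaf_force); simpl in *;
    set (q := sqrt _) in *; set (s := r t) in *;
    try (repeat split; first [eexists; eauto | lra | apply Rgt_not_eq; repeat apply Rmult_lt_0_compat; lra]; fail);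
    assert (hc : r' t ^ 2 = 1 - s ^ 6) by (simpl; lra);
    assert (hq : q ^ 2 = 1 + 8 * s ^ 6) by (simpl; lra);
    field [hc hq]; lra.
Qed.

Lemma leaf3_duplication t : r (2 * t) = leaf3_dup (r t) * r' t.
Proof.
  apply (monomial_ode2_sol_unique (-12) 5 2 (fun t => r (2 * t)) (fun t => 2 * r' (2 * t))
    (fun t => leaf3_dup (r t) * r' t) (fun t => leaf3_dup_deriv (r t)) 0).
  - apply (is_ode2_sol_ext _ (fun t => r (0 + 2 * t)) (fun t => 2 * r' (0 + 2 * t)));
      try (intros s; rewrite Rplus_0_l; reflexivity).
    apply (is_ode2_sol_affine (leaf_force 3)); [intros u; unfold leaf_force; simpl; ring | exact r_sol].
  - exact leaf3_dup_ode2_sol.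
  - intros s. pose proof (leaf_abs_le_1 3 r r' ltac:(lia) r_0 r'_0 r_sol (2 * s)). lra.
  - intros s. rewrite Rabs_mult.
    pose proof (leaf3_dup_abs_le _ (leaf_abs_le_1 3 r r' ltac:(lia) r_0 r'_0 r_sol s)).
    pose proof (leaf_deriv_abs_le_1 3 r r' ltac:(lia) r_0 r'_0 r_sol s).
    pose proof (Rabs_pos (leaf3_dup (r s))). pose proof (Rabs_pos (r' s)). nra.
  - rewrite Rmult_0_r, r_0. unfold leaf3_dup, Rdiv. ring.
  - rewrite Rmult_0_r, r_0, r'_0. unfold leaf3_dup_deriv.
    replace (1 + 8 * 0 ^ 6) with 1 by ring. rewrite sqrt_1. field.
Qed.

Lemma leaf3_dup_mul_abs_deriv t :
  leaf3_dup (r t) * Rabs (r' t) = 2 * r t * sqrt (1 - r t ^ 6) / sqrt (1 + 8 * r t ^ 6).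
Proof.
  pose proof (leaf_energy 3 r r' ltac:(lia) r_0 r'_0 r_sol t) as E.
  replace (1 - r t ^ 6) with (r' t ^ 2) by (simpl in *; lra).
  rewrite <- sqrt_Rsqr_abs, Rsqr_pow2. unfold leaf3_dup, Rdiv. ring.
Qed.

End Duplication.

Theorem mainTheorem6 (sleaf3 : R -> R) (Hs : is_sleaf 3 sleaf3) (m : Z) (l : R) :
  (pi_n 3 / 2 * (4 * IZR m - 1) <= l <= pi_n 3 / 2 * (4 * IZR m + 1) ->
   sleaf3 (2 * l) =
     2 * sleaf3 l * sqrt (1 - sleaf3 l ^ 6) / sqrt (1 + 8 * sleaf3 l ^ 6)) /\
  (pi_n 3 / 2 * (4 * IZR m + 1) <= l <= pi_n 3 / 2 * (4 * IZR m + 3) ->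
   sleaf3 (2 * l) =
     - (2 * sleaf3 l * sqrt (1 - sleaf3 l ^ 6) / sqrt (1 + 8 * sleaf3 l ^ 6))).
Proof.
  destruct (proj1 (is_sleaf_ode2_sol 3 sleaf3) Hs) as [r' [r_0 [r'_0 r_sol]]].
  assert (n_pos : (0 < 3)%nat) by lia.
  destruct (leaf_first_deriv_zero 3 sleaf3 r' n_pos r_0 r'_0 r_sol)
    as [tau [tau_pos [r'_tau r'_pos]]].
  rewrite (pi_n_eq 3 sleaf3 r' n_pos r_0 r'_0 r_sol tau tau_pos r'_tau r'_pos).
  replace (2 * tau / 2) with tau by field.
  rewrite (leaf3_duplication sleaf3 r' r_0 r'_0 r_sol l),
    <- (leaf3_dup_mul_abs_deriv sleaf3 r' r_0 r'_0 r_sol l).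
  split; intros hl.
  - rewrite Rabs_pos_eq; [reflexivity|].
    exact (leaf_deriv_nonneg 3 sleaf3 r' n_pos r_0 r'_0 r_sol tau r'_tau r'_pos m l hl).
  - rewrite Rabs_left1; [ring|].
    exact (leaf_deriv_nonpos 3 sleaf3 r' n_pos r_0 r'_0 r_sol tau r'_tau r'_pos m l hl).
Qed.
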